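(* Let $(X,\alpha,T)$ be a dynamical system with $T=\mathbb{Z}$ or $T=\mathbb{R}$ acting by homeomorphisms on a compact metrizable space $X$. If $f\in E$ and $g\in E^+\setminus\{\alpha^t: t\in T, t\ge0\}$, then $fg\in E^+$.
   Context: $\alpha^t$ are homeomorphisms with $\alpha^{s+t}=\alpha^s\circ\alpha^t$, $\alpha^0=\mathrm{id}$. $E$ is the closure of $\{\alpha^t:t\in T\}$ in $X^X$ (maps $X\to X$, pointwise convergence topology, composition as product) and $E^+$ the closure of $\{\alpha^t:t\ge0\}$. *)

From HB Require Import structures.
From mathcomp Require Import all_boot all_order all_algebra.
From mathcomp Require Import all_classical all_reals all_analysis.
Set Implicit Arguments. Unset Strict Implicit. Unset Printing Implicit Defensive.
Import Order.TTheory GRing.Theory Num.Theory.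
Import numFieldNormedType.Exports.
Local Open Scope classical_set_scope.
Local Open Scope ring_scope.

(* Group-action axioms for an action of the additive group T on X by
   homeomorphisms: alpha^0 = id, alpha^(s+t) = alpha^s o alpha^t, and each
   alpha^t continuous (hence a homeomorphism with inverse alpha^(-t)). *)
Definition group_action_homeo (T : zmodType) (X : topologicalType)
  (alpha : T -> X -> X) : Prop :=
  [/\ alpha 0 = id,
      (forall s t, alpha (s + t) = alpha s \o alpha t) &
      (forall t, continuous (alpha t))].

Definition Zflow (X : topologicalType) (alpha : int -> X -> X) : Prop :=
  group_action_homeo alpha.

Definition Rflow (R : realType) (X : topologicalType) (alpha : R -> X -> X) : Prop :=
  group_action_homeo alpha /\
  continuous (fun p : R * X => alpha p.1 p.2).

Definition Ecl (T : Type) (X : topologicalType) (alpha : T -> X -> X) :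
  set (X -> X) :=
  @closure {ptws X -> X} [set alpha t | t in [set: T]].

Definition Epos (T : numDomainType) (X : topologicalType)
  (alpha : T -> X -> X) : set (X -> X) :=
  @closure {ptws X -> X} [set alpha t | t in [set t : T | 0 <= t]].

From HB Require Import structures.
From mathcomp Require Import all_boot all_order all_algebra.
From mathcomp Require Import all_classical all_reals all_analysis.
From mathcomp Require Import zify.
Import Order.TTheory GRing.Theory Num.Theory.
Import numFieldNormedType.Exports.
Local Open Scope classical_set_scope.
Local Open Scope ring_scope.

(* The orbit segments {alpha^t : 0 <= t <= N} are compact (finite for T = Z,
   continuous images of [0, N] for T = R), hence closed in the Hausdorff space
   X^X.  A g in E^+ that is no alpha^t with t >= 0 therefore lies in the
   closure of every tail {alpha^t : t >= N}.  Composing on the left with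
   alpha^s, which is continuous on X^X, puts alpha^s g in the closure of
   {alpha^(s+t) : t >= |s|}, a subset of E^+; composing on the right with g is
   continuous too, so f g lies in the closure of {alpha^s g}, inside E^+. *)

Lemma continuous_image_closure {W V : topologicalType} {h : W -> V} (A : set W) :
  continuous h -> h @` closure A `<=` closure (h @` A).
Proof.
move=> h_cont _ [p clAp <-] B /h_cont hB; have [q [Aq Bq]] := clAp _ hB.
by exists (h q); split => //; exists q.
Qed.

Section PointwiseTopology.
Context {X : topologicalType}.

Lemma continuous_ptws (W : topologicalType) (h : W -> {ptws X -> X}) :
  (forall x, continuous (fun w => h w x)) -> continuous h.
Proof.
move=> h_cont w; apply/cvg_sup => x.
exact: (@continuous_comp_initial _ _ _ (fun f : X -> X => f x) h (h_cont x)).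
Qed.

Lemma continuous_ptws_compr (g : X -> X) :
  continuous (fun h : {ptws X -> X} => (h \o g : {ptws X -> X})).
Proof.
by apply: continuous_ptws => x; exact: (@proj_continuous X (fun _ => X) (g x)).
Qed.

Lemma continuous_ptws_compl {k : X -> X} : continuous k ->
  continuous (fun h : {ptws X -> X} => (k \o h : {ptws X -> X})).
Proof.
move=> k_cont; apply: continuous_ptws => x /= h.
by apply: continuous_comp; [exact: (@proj_continuous X (fun _ => X) x)|exact: k_cont].
Qed.

Lemma hausdorff_ptws : hausdorff_space X -> hausdorff_space {ptws X -> X}.
Proof. by move=> hX; apply: (@hausdorff_product X (fun _ => X)) => _. Qed.

End PointwiseTopology.

Definition orbit_from {T : numDomainType} {X : topologicalType}
  (alpha : T -> X -> X) (N : T) : set {ptws X -> X} :=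
  [set alpha t | t in [set t | N <= t]].

Definition orbit_segment {T : numDomainType} {X : topologicalType}
  (alpha : T -> X -> X) (N : T) : set {ptws X -> X} :=
  [set alpha t | t in [set t | 0 <= t <= N]].

Section OrbitClosure.
Variables (T : realDomainType) (X : topologicalType) (alpha : T -> X -> X).
Hypothesis alphaD : forall s t, alpha (s + t) = alpha s \o alpha t.
Hypothesis alpha_cont : forall t, continuous (alpha t).

Lemma Epos_compl_of_tail (s : T) (g : X -> X) :
  closure (orbit_from alpha `|s|) g -> Epos alpha (alpha s \o g).
Proof.
move=> clg; rewrite /Epos.
have := continuous_image_closure (orbit_from alpha `|s|)
  (continuous_ptws_compl (alpha_cont s)).
move=> /(_ (alpha s \o g) (ex_intro2 _ _ _ clg erefl)); apply: closureS.
move=> _ [_ [t /= st <-] <-]; exists (s + t); last by rewrite alphaD.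
by rewrite /= -(subrr s) lerD2l (le_trans _ st) // -normrN ler_norm.
Qed.

Lemma Epos_comp_of_tails (f g : X -> X) :
  (forall N, 0 <= N -> closure (orbit_from alpha N) g) ->
  Ecl alpha f -> Epos alpha (f \o g).
Proof.
move=> clg Ef; rewrite (closure_id (Epos alpha : set {ptws X -> X})).1; last first.
  exact: closed_closure.
have := continuous_image_closure
  ([set alpha t | t in [set: T]] : set {ptws X -> X}) (continuous_ptws_compr g).
move=> /(_ (f \o g) (ex_intro2 _ _ _ Ef erefl)); apply: closureS.
by move=> _ [_ [s _ <-] <-]; apply/Epos_compl_of_tail/clg.
Qed.

Lemma Epos_nonorbit_closure_tails (g : X -> X) :
  (forall N, 0 <= N -> closed (orbit_segment alpha N)) ->
  Epos alpha g -> ~ (exists2 t, 0 <= t & alpha t = g) ->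
  forall N, 0 <= N -> closure (orbit_from alpha N) g.
Proof.
move=> seg_closed Eg g_not_orbit N N0.
have split_nonneg : [set t : T | 0 <= t] = [set t | 0 <= t <= N] `|` [set t | N <= t].
  apply/seteqP; split => t /=.
  - by move=> t0; case: (leP t N) => tN; [left; apply/andP | right; exact: ltW].
  - by case=> [/andP[]|] //; exact: le_trans.
move: Eg; rewrite /Epos split_nonneg image_setU closureU => -[|//].
move: (seg_closed N N0) => /closure_id <-.
by case=> t /andP[t0 _] tg; case: g_not_orbit; exists t.
Qed.

Lemma Epos_comp_of_compact_segments (f g : X -> X) :
  hausdorff_space X -> (forall N, 0 <= N -> compact (orbit_segment alpha N)) ->
  Ecl alpha f -> Epos alpha g -> ~ (exists2 t, 0 <= t & alpha t = g) ->
  Epos alpha (f \o g).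
Proof.
move=> hX seg_compact Ef Eg g_not_orbit.
apply: Epos_comp_of_tails => //; apply: Epos_nonorbit_closure_tails => // N N0.
exact: compact_closed (hausdorff_ptws hX) (seg_compact N N0).
Qed.

End OrbitClosure.

Lemma finite_int_segment (N : int) : finite_set [set t : int | 0 <= t <= N].
Proof.
apply: (@sub_finite_set _ _ ((fun n : nat => n%:Z) @` `I_(absz N).+1)).
  by move=> t /andP[t0 tN]; exists (absz t); rewrite ?gez0_abs //= ltnS; lia.
exact/finite_image/finite_II.
Qed.

Lemma compact_orbit_segment_int (X : topologicalType) (alpha : int -> X -> X)
  (N : int) : compact (orbit_segment alpha N).
Proof. exact/finite_compact/finite_image/finite_int_segment. Qed.

Lemma compact_orbit_segment_real (R : realType) (X : topologicalType)
  (alpha : R -> X -> X) (N : R) :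
  continuous (fun p : R * X => alpha p.1 p.2) -> compact (orbit_segment alpha N).
Proof.
move=> alpha_cont; rewrite /orbit_segment.
have -> : [set t : R | 0 <= t <= N] = `[0, N]%classic.
  by apply/seteqP; split => t /=; rewrite in_itv.
apply: continuous_compact; last exact: segment_compact.
apply: continuous_subspaceT; apply: continuous_ptws => x t.
apply: (@continuous2_cvg _ _ _ _ _ _ (fun w => w) (fun _ => x) alpha t x).
- exact: (alpha_cont (t, x)).
- exact: cvg_id.
- exact: cvg_cst.
Qed.

Theorem lemma3p5 (R : realType) :
  (forall (X : pseudoMetricType R) (alpha : int -> X -> X),
     hausdorff_space X -> compact [set: X] -> Zflow alpha ->
     forall f g : X -> X,
       Ecl alpha f ->
       Epos alpha g -> ~ (exists2 t : int, 0 <= t & alpha t = g) ->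
       Epos alpha (f \o g)) /\
  (forall (X : pseudoMetricType R) (alpha : R -> X -> X),
     hausdorff_space X -> compact [set: X] -> Rflow alpha ->
     forall f g : X -> X,
       Ecl alpha f ->
       Epos alpha g -> ~ (exists2 t : R, 0 <= t & alpha t = g) ->
       Epos alpha (f \o g)).
Proof.
split.
- move=> X alpha hX _ [_ alphaD alpha_cont] f g.
  apply: Epos_comp_of_compact_segments => // N _.
  exact: compact_orbit_segment_int.
- move=> X alpha hX _ [[_ alphaD alpha_cont] flow_cont] f g.
  apply: Epos_comp_of_compact_segments => // N _.
  exact: compact_orbit_segment_real.
Qed.
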